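(* $\mathsf{AUC}_{[0,1]}\not\le_W *\text{-}\mathsf{WWKL}$.
   Context: A represented space is a pair $(X,\delta_X)$ with $\delta_X:\subseteq\mathbb{N}^\mathbb{N}\to X$ a partial surjection; $[0,1]$ carries its Cauchy representation. A realizer of $f:\subseteq X\rightrightarrows Y$ is a partial $F$ with $\delta_Y F(p)\in f(\delta_X(p))$ for all $p\in\mathrm{dom}(f\circ\delta_X)$. $f\le_W g$ if there are computable partial $H,K:\subseteq\mathbb{N}^\mathbb{N}\to\mathbb{N}^\mathbb{N}$ such that $p\mapsto H\langle p,GK(p)\rangle$ realizes $f$ for every realizer $G$ of $g$. $\mathcal{A}_-([0,1])$ denotes the closed subsets of $[0,1]$ represented by negative information (a name of $A$ enumerates rational open intervals whose union is $[0,1]\setminus A$). $\mathsf C_{[0,1]}:\subseteq\mathcal A_-([0,1])\rightrightarrows[0,1]$, $A\mapsto A$, is defined on nonempty $A$. All-or-unique choice $\mathsf{AUC}_{[0,1]}$ is $\mathsf C_{[0,1]}$ restricted to the sets $[0,1]$ and $\{x\}$, $x\in[0,1]$. $\mathrm{Tr}$ is the set of binary trees $T\subseteq\{0,1\}^*$, represented by characteristic functions; $[T]$ its set of infinite paths; $\mu$ the uniform measure on $2^\mathbb N$ ($\mu(w2^\mathbb N)=2^{-|w|}$). $*\text{-}\mathsf{WWKL}:\subseteq\mathbb N\times\mathrm{Tr}\rightrightarrows2^\mathbb N$, $(n,T)\mapsto[T]$, has domain $\{(n,T):\mu([T])>2^{-n}\}$. *)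

From Stdlib Require Import Reals QArith Qreals List Arith Cantor.
Import ListNotations.
Open Scope R_scope.

Definition baire := nat -> nat.

Definition bpair (p q : baire) : baire :=
  fun k => if Nat.even k then p (Nat.div2 k) else q (Nat.div2 k).

Inductive term : Type :=
| TZero : term
| TSucc : term
| TProj : nat -> term
| TOrc : term
| TComp : term -> list term -> term
| TRec : term -> term -> term
| TMu : term -> term.

Inductive eval (p : baire) : term -> list nat -> nat -> Prop :=
| eZero xs : eval p TZero xs 0
| eSucc xs : eval p TSucc xs (S (hd 0%nat xs))
| eProj i xs : eval p (TProj i) xs (nth i xs 0%nat)
| eOrc xs : eval p TOrc xs (p (hd 0%nat xs))
| eComp f gs xs ys y : evals p gs xs ys -> eval p f ys y -> eval p (TComp f gs) xs y
| eRec0 f g xs y : eval p f xs y -> eval p (TRec f g) (0%nat :: xs) y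
| eRecS f g n xs r y : eval p (TRec f g) (n :: xs) r -> eval p g (n :: r :: xs) y ->
    eval p (TRec f g) (S n :: xs) y
| eMu f xs n : eval p f (n :: xs) 0%nat ->
    (forall m, (m < n)%nat -> exists k, eval p f (m :: xs) (S k)) ->
    eval p (TMu f) xs n
with evals (p : baire) : list term -> list nat -> list nat -> Prop :=
| esNil xs : evals p [] xs []
| esCons g gs xs y ys : eval p g xs y -> evals p gs xs ys -> evals p (g :: gs) xs (y :: ys).

Record pfun : Type := { pdom : baire -> Prop; papp : baire -> baire }.

Definition computable (F : pfun) : Prop :=
  exists e : term, forall p, pdom F p -> forall n, eval p e [n] (papp F p n).

Record rep_space : Type := { carrier : Type; name : baire -> carrier -> Prop }.

Record mvfun (X Y : Type) : Type :=
  { mdom : X -> Prop; mval : X -> Y -> Prop }.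
Arguments mdom {X Y}.
Arguments mval {X Y}.

Definition realizes (X Y : rep_space) (F : pfun) (f : mvfun (carrier X) (carrier Y)) : Prop :=
  forall p x, name X p x -> mdom f x ->
    pdom F p /\ exists y, name Y (papp F p) y /\ mval f x y.

Definition wcomp (H G K : pfun) : pfun :=
  {| pdom := fun p => pdom K p /\ pdom G (papp K p) /\
                      pdom H (bpair p (papp G (papp K p)));
     papp := fun p => papp H (bpair p (papp G (papp K p))) |}.

Definition weihrauch_le (X Y Z W : rep_space)
  (f : mvfun (carrier X) (carrier Y)) (g : mvfun (carrier Z) (carrier W)) : Prop :=
  exists H K : pfun, computable H /\ computable K /\
    forall G : pfun, realizes Z W G g -> realizes X Y (wcomp H G K) f.

Definition zdec (n : nat) : Z :=
  if Nat.even n then Z.of_nat (Nat.div2 n) else (- Z.of_nat (S (Nat.div2 n)))%Z.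
Definition decQ (n : nat) : Q :=
  let (a, b) := Cantor.of_nat n in Qmake (zdec a) (Pos.of_succ_nat b).

Definition unit_interval : rep_space :=
  {| carrier := R;
     name := fun p x => 0 <= x <= 1 /\
                        forall n, Rabs (Q2R (decQ (p n)) - x) <= (/ 2) ^ n |}.

Definition in_interval (n : nat) (x : R) : Prop :=
  let (a, b) := Cantor.of_nat n in Q2R (decQ a) < x < Q2R (decQ b).

Definition closed_neg : rep_space :=
  {| carrier := R -> Prop;
     name := fun p A => (forall x, A x -> 0 <= x <= 1) /\
                        forall x, 0 <= x <= 1 -> (~ A x <-> exists n, in_interval (p n) x) |}.

Definition nat_space : rep_space :=
  {| carrier := nat; name := fun p n => p 0%nat = n |}.

(** binary words coded bijectively by naturals *)
Fixpoint enc (w : list bool) : nat :=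
  match w with
  | [] => 0%nat
  | b :: w' => (2 * enc w' + 1 + (if b then 1 else 0))%nat
  end.

Definition isTree (T : list bool -> bool) : Prop :=
  forall w u, T (w ++ u) = true -> T w = true.

Definition tree_space : rep_space :=
  {| carrier := list bool -> bool;
     name := fun p T => isTree T /\
                        forall w, p (enc w) = (if T w then 1 else 0)%nat |}.

Definition prod_space (X Y : rep_space) : rep_space :=
  {| carrier := (carrier X * carrier Y)%type;
     name := fun r xy => name X (fun k => r (2 * k)%nat) (fst xy) /\
                         name Y (fun k => r (2 * k + 1)%nat) (snd xy) |}.

Definition cantor_space : rep_space :=
  {| carrier := nat -> bool;
     name := fun p X => forall n, p n = (if X n then 1 else 0)%nat |}.

Definition prefix (X : nat -> bool) (k : nat) : list bool := map X (seq 0 k).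
Definition path (T : list bool -> bool) (X : nat -> bool) : Prop :=
  forall k, T (prefix X k) = true.

Fixpoint words (k : nat) : list (list bool) :=
  match k with
  | O => [[]]
  | S k' => map (cons false) (words k') ++ map (cons true) (words k')
  end.

(** mu(union of cylinders [w], w in T, |w| = k) = #{w in T : |w| = k} / 2^k *)
Definition level_measure (T : list bool -> bool) (k : nat) : R :=
  INR (length (filter T (words k))) / 2 ^ k.

(** mu([T]) > r, where mu([T]) = lim_k level_measure T k (continuity from above) *)
Definition measure_paths_gt (T : list bool -> bool) (r : R) : Prop :=
  exists l, Un_cv (level_measure T) l /\ r < l.

Definition AUC : mvfun (R -> Prop) R :=
  {| mdom := fun A => (forall y, A y <-> 0 <= y <= 1) \/
                      (exists x, 0 <= x <= 1 /\ forall y, A y <-> y = x);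
     mval := fun A x => A x |}.

Definition star_WWKL : mvfun (nat * (list bool -> bool)) (nat -> bool) :=
  {| mdom := fun nT => isTree (snd nT) /\ measure_paths_gt (snd nT) ((/ 2) ^ fst nT);
     mval := fun nT X => path (snd nT) X |}.

(** Suppose computable [H], [K] witness the reduction.  Feed [K] the name [zero_name]
    of [[0,1]] (it enumerates only empty intervals); this yields an instance
    [(n0, T0)] with [mu [T0] > 2^-n0].  Every path of [T0] may be the realizer's answer,
    so by the use principle and the fan theorem (König's lemma) there is a level
    [L >= n0] at which every node [w] of [T0] already decides the [k0 = n0 + 2]-th
    output of [H] on [<zero_name, w>].  By pigeonhole some dyadic point [j / 2^n0] is
    [2^-k0]-approximated by at most [2^(L-n0)] of these nodes.  Now extend a long
    initial segment of [zero_name] to a name of the singleton [{j / 2^n0}]; by continuity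
    of [K] the new instance has the same bound and agrees with [T0] up to level [L].
    Having measure [> 2^-n0], its tree has a path leaving the sparse set of nodes near
    [j / 2^n0]; answering with this path makes [H] output a point far from [j / 2^n0]. *)
From Stdlib Require Import Reals QArith Qreals List Lia Lra Arith Cantor ZArith.
From Stdlib Require Import Classical ClassicalEpsilon FunctionalExtensionality.
Import ListNotations.

Definition agree (U : nat) (p q : baire) : Prop := forall i, (i < U)%nat -> p i = q i.

Lemma agree_mono U V p q : (U <= V)%nat -> agree V p q -> agree U p q.
Proof. intros HUV H i Hi. apply H. lia. Qed.

Lemma common_bound (n : nat) (R : nat -> nat -> Prop) :
  (forall m U V, (U <= V)%nat -> R m U -> R m V) ->
  (forall m, (m < n)%nat -> exists U, R m U) -> exists U, forall m, (m < n)%nat -> R m U.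
Proof.
  intros Hmono. induction n as [|n IH]; intros H.
  - exists 0%nat. intros m Hm. lia.
  - destruct IH as [U HU]. { intros m Hm. apply H. lia. }
    destruct (H n (Nat.lt_succ_diag_r n)) as [V HV].
    exists (Nat.max U V). intros m Hm.
    destruct (Nat.eq_dec m n) as [->|Hne].
    + apply (Hmono n V); [lia|exact HV].
    + apply (Hmono m U); [lia|]. apply HU. lia.
Qed.

(** Mutual induction for [eval]/[evals] whose hypothesis for [TMu] also covers the
    non-zero evaluations below the minimum (Coq's [Scheme] does not see them, as
    they sit under an existential). *)
Section EvalInduction.
Variable p : baire.
Variable P : term -> list nat -> nat -> Prop.
Variable Q : list term -> list nat -> list nat -> Prop.
Hypothesis HZero : forall xs, P TZero xs 0.
Hypothesis HSucc : forall xs, P TSucc xs (S (hd 0%nat xs)).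
Hypothesis HProj : forall i xs, P (TProj i) xs (nth i xs 0%nat).
Hypothesis HOrc : forall xs, P TOrc xs (p (hd 0%nat xs)).
Hypothesis HComp : forall f gs xs ys y, evals p gs xs ys -> Q gs xs ys ->
  eval p f ys y -> P f ys y -> P (TComp f gs) xs y.
Hypothesis HRec0 : forall f g xs y, eval p f xs y -> P f xs y -> P (TRec f g) (0%nat :: xs) y.
Hypothesis HRecS : forall f g n xs r y,
  eval p (TRec f g) (n :: xs) r -> P (TRec f g) (n :: xs) r ->
  eval p g (n :: r :: xs) y -> P g (n :: r :: xs) y -> P (TRec f g) (S n :: xs) y.
Hypothesis HMu : forall f xs n, eval p f (n :: xs) 0%nat -> P f (n :: xs) 0%nat ->
  (forall m, (m < n)%nat -> exists k, eval p f (m :: xs) (S k) /\ P f (m :: xs) (S k)) ->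
  P (TMu f) xs n.
Hypothesis QNil : forall xs, Q [] xs [].
Hypothesis QCons : forall g gs xs y ys, eval p g xs y -> P g xs y ->
  evals p gs xs ys -> Q gs xs ys -> Q (g :: gs) xs (y :: ys).

Fixpoint eval_ind2 e xs y (H : eval p e xs y) {struct H} : P e xs y :=
  match H in eval _ e xs y return P e xs y with
  | eZero _ xs => HZero xs
  | eSucc _ xs => HSucc xs
  | eProj _ i xs => HProj i xs
  | eOrc _ xs => HOrc xs
  | eComp _ f gs xs ys y H1 H2 =>
      HComp f gs xs ys y H1 (evals_ind2 _ _ _ H1) H2 (eval_ind2 _ _ _ H2)
  | eRec0 _ f g xs y H1 => HRec0 f g xs y H1 (eval_ind2 _ _ _ H1)
  | eRecS _ f g n xs r y H1 H2 =>
      HRecS f g n xs r y H1 (eval_ind2 _ _ _ H1) H2 (eval_ind2 _ _ _ H2)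
  | eMu _ f xs n H0 Hl => HMu f xs n H0 (eval_ind2 _ _ _ H0)
      (fun m Hm => match Hl m Hm with
                   | ex_intro _ k Hk => ex_intro _ k (conj Hk (eval_ind2 _ _ _ Hk)) end)
  end
with evals_ind2 gs xs ys (H : evals p gs xs ys) {struct H} : Q gs xs ys :=
  match H in evals _ gs xs ys return Q gs xs ys with
  | esNil _ xs => QNil xs
  | esCons _ g gs xs y ys H1 H2 =>
      QCons g gs xs y ys H1 (eval_ind2 _ _ _ H1) H2 (evals_ind2 _ _ _ H2)
  end.
End EvalInduction.

Lemma eval_det p e xs y : eval p e xs y -> forall y', eval p e xs y' -> y' = y.
Proof.
  revert e xs y.
  apply (eval_ind2 p (fun e xs y => forall y', eval p e xs y' -> y' = y)
                     (fun gs xs ys => forall ys', evals p gs xs ys' -> ys' = ys)).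
  - intros xs y' H; inversion H; auto.
  - intros xs y' H; inversion H; auto.
  - intros i xs y' H; inversion H; auto.
  - intros xs y' H; inversion H; auto.
  - intros f gs xs ys y _ IH1 _ IH2 y' H. inversion H; subst.
    match goal with Ha : evals _ gs _ _ |- _ => apply IH1 in Ha end. subst. auto.
  - intros f g xs y _ IH1 y' H. inversion H; subst. auto.
  - intros f g n xs r y _ IH1 _ IH2 y' H. inversion H; subst.
    match goal with Ha : eval _ (TRec f g) _ _ |- _ => apply IH1 in Ha end. subst. auto.
  - intros f xs n _ IH0 Hl y' H. inversion H; subst.
    destruct (Nat.lt_total y' n) as [Hlt|[Heq|Hgt]].
    + destruct (Hl y' Hlt) as [k [_ Hk]].
      match goal with Ha : eval _ f (y' :: _) 0 |- _ => apply Hk in Ha end. discriminate.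
    + exact Heq.
    + match goal with Ha : forall m, (m < y')%nat -> _ |- _ =>
        destruct (Ha n Hgt) as [k Hk] end.
      apply IH0 in Hk. discriminate.
  - intros xs ys' H; inversion H; auto.
  - intros g gs xs y ys _ IH1 _ IH2 ys' H. inversion H; subst.
    match goal with Ha : eval _ g _ _, Hb : evals _ gs _ _ |- _ =>
      apply IH1 in Ha; apply IH2 in Hb end.
    subst. auto.
Qed.

(** Use principle: a terminating computation reads only finitely many oracle values,
    so it succeeds unchanged for every oracle agreeing on an initial segment. *)
Lemma eval_cont p e xs y : eval p e xs y ->
  exists U, forall p', agree U p' p -> eval p' e xs y.
Proof.
  revert e xs y.
  apply (eval_ind2 p (fun e xs y => exists U, forall p', agree U p' p -> eval p' e xs y)
             (fun gs xs ys => exists U, forall p', agree U p' p -> evals p' gs xs ys)).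
  - intros xs. exists 0%nat. intros; constructor.
  - intros xs. exists 0%nat. intros; constructor.
  - intros i xs. exists 0%nat. intros; constructor.
  - intros xs. exists (S (hd 0%nat xs)). intros p' Ha.
    rewrite <- (Ha (hd 0%nat xs)) by lia. constructor.
  - intros f gs xs ys y _ [U1 H1] _ [U2 H2]. exists (Nat.max U1 U2). intros p' Ha.
    econstructor; [apply H1|apply H2]; eapply agree_mono; try eassumption; lia.
  - intros f g xs y _ [U1 H1]. exists U1. intros. constructor. auto.
  - intros f g n xs r y _ [U1 H1] _ [U2 H2]. exists (Nat.max U1 U2). intros p' Ha.
    econstructor; [apply H1|apply H2]; eapply agree_mono; try eassumption; lia.
  - intros f xs n _ [U0 H0] Hl.
    destruct (common_bound n
                (fun m U => exists k, forall p', agree U p' p -> eval p' f (m :: xs) (S k)))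
      as [U1 HU1].
    + intros m U V HUV [k Hk]. exists k. intros p' Ha. apply Hk. eapply agree_mono; eauto.
    + intros m Hm. destruct (Hl m Hm) as [k [_ [U Hk]]]. exists U, k. exact Hk.
    + exists (Nat.max U0 U1). intros p' Ha. constructor.
      * apply H0. apply (agree_mono U0 (Nat.max U0 U1)); [lia|exact Ha].
      * intros m Hm. destruct (HU1 m Hm) as [k Hk]. exists k. apply Hk.
        apply (agree_mono U1 (Nat.max U0 U1)); [lia|exact Ha].
  - intros xs. exists 0%nat. intros; constructor.
  - intros g gs xs y ys _ [U1 H1] _ [U2 H2]. exists (Nat.max U1 U2). intros p' Ha.
    constructor; [apply H1|apply H2]; eapply agree_mono; try eassumption; lia.
Qed.

Lemma computable_use (F : pfun) (e : term) :
  (forall p, pdom F p -> forall i, eval p e [i] (papp F p i)) ->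
  forall p N, pdom F p ->
  exists M, forall p', pdom F p' -> agree M p' p -> agree N (papp F p') (papp F p).
Proof.
  intros HF p N Hp.
  destruct (common_bound N (fun i U => forall p', agree U p' p -> eval p' e [i] (papp F p i)))
    as [M HM].
  - intros i U V HUV HU p' Ha. apply HU. eapply agree_mono; eauto.
  - intros i _. exact (eval_cont _ _ _ _ (HF p Hp i)).
  - exists M. intros p' Hp' Ha i Hi.
    exact (eval_det _ _ _ _ (HM i Hi p' Ha) _ (HF p' Hp' i)).
Qed.

Definition asbool (P : Prop) : bool := if excluded_middle_informative P then true else false.

Lemma asbool_true (P : Prop) : asbool P = true <-> P.
Proof. unfold asbool. destruct (excluded_middle_informative P); split; congruence || tauto. Qed.

Definition count (P : list bool -> bool) (k : nat) : nat := length (filter P (words k)).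

Lemma filter_map_length {A B} (P : B -> bool) (f : A -> B) l :
  length (filter P (map f l)) = length (filter (fun x => P (f x)) l).
Proof. induction l as [|a l IH]; simpl; auto. destruct (P (f a)); simpl; auto. Qed.

Lemma count_S P k :
  count P (S k) = (count (fun w => P (false :: w)) k + count (fun w => P (true :: w)) k)%nat.
Proof. unfold count. simpl. rewrite filter_app, length_app, !filter_map_length. reflexivity. Qed.

Lemma words_length k w : In w (words k) -> length w = k.
Proof.
  revert w; induction k as [|k IH]; simpl; intros w H.
  - destruct H as [<-|[]]; auto.
  - apply in_app_or in H.
    destruct H as [H|H]; apply in_map_iff in H; destruct H as [w' [<- H]]; simpl; f_equal; auto.
Qed.

Lemma count_le P k : (count P k <= 2 ^ k)%nat.
Proof.
  revert P; induction k as [|k IH]; intros P.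
  - unfold count; simpl. destruct (P []); simpl; lia.
  - rewrite count_S. simpl.
    pose proof (IH (fun w => P (false :: w))). pose proof (IH (fun w => P (true :: w))). lia.
Qed.

Lemma count_zero P k : (forall w, length w = k -> P w = false) -> count P k = 0%nat.
Proof.
  intros H. unfold count.
  assert (G : forall l, (forall w, In w l -> length w = k) -> filter P l = []).
  { induction l as [|a l IH]; simpl; intros Hl; auto. rewrite H by (apply Hl; auto). auto. }
  rewrite G; auto. apply words_length.
Qed.

Lemma count_prefix_bound L : forall d P Q,
  (forall w, length w = (L + d)%nat -> P w = true -> Q (firstn L w) = true) ->
  (count P (L + d) <= count Q L * 2 ^ d)%nat.
Proof.
  induction L as [|L IH]; intros d P Q H.
  - simpl. unfold count at 2. simpl. destruct (Q []) eqn:Eq; simpl.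
    + pose proof (count_le P d). lia.
    + rewrite count_zero; [lia|]. intros w Hw. destruct (P w) eqn:Pw; auto.
      specialize (H w Hw Pw). simpl in H. congruence.
  - simpl plus. rewrite !count_S.
    assert (Hb : forall b w, length w = (L + d)%nat -> P (b :: w) = true ->
                             Q (b :: firstn L w) = true).
    { intros b w Hw Hp. apply (H (b :: w)); simpl; auto. }
    pose proof (IH d _ (fun w => Q (false :: w)) (Hb false)).
    pose proof (IH d _ (fun w => Q (true :: w)) (Hb true)). nia.
Qed.

Fixpoint sumn (N : nat) (f : nat -> nat) : nat :=
  match N with O => 0%nat | S N => (sumn N f + f N)%nat end.

Lemma sumn_ext N f g : (forall j, (j < N)%nat -> f j = g j) -> sumn N f = sumn N g.
Proof. induction N; simpl; intros H; auto. rewrite IHN, H; auto. Qed.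

Lemma sumn_zero N f : (forall j, (j < N)%nat -> f j = 0%nat) -> sumn N f = 0%nat.
Proof. induction N; simpl; intros H; auto. rewrite IHN, H; auto. Qed.

Lemma sumn_add N f g : sumn N (fun j => f j + g j)%nat = (sumn N f + sumn N g)%nat.
Proof. induction N; simpl; auto. rewrite IHN. lia. Qed.

Lemma sumn_ge N f c : (forall j, (j < N)%nat -> (c <= f j)%nat) -> (N * c <= sumn N f)%nat.
Proof.
  induction N; simpl; intros H; auto.
  specialize (IHN ltac:(auto)). specialize (H N ltac:(lia)). lia.
Qed.

Lemma sumn_disjoint_indicator N (P : nat -> bool) :
  (forall j j', (j < N)%nat -> (j' < N)%nat -> P j = true -> P j' = true -> j = j') ->
  (sumn N (fun j => if P j then 1 else 0) <= 1)%nat.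
Proof.
  induction N; simpl; intros Hd; [lia|].
  destruct (P N) eqn:E.
  - rewrite sumn_zero; [lia|].
    intros j Hj. destruct (P j) eqn:E'; auto. specialize (Hd j N ltac:(lia) ltac:(lia) E' E). lia.
  - rewrite Nat.add_0_r. apply IHN. intros j j' Hj Hj'. apply Hd; lia.
Qed.

Lemma sumn_disjoint_filter N (P : nat -> list bool -> bool) l :
  (forall a j j', (j < N)%nat -> (j' < N)%nat -> P j a = true -> P j' a = true -> j = j') ->
  (sumn N (fun j => length (filter (P j) l)) <= length l)%nat.
Proof.
  intros Hd. induction l as [|a l IH].
  - rewrite sumn_zero; auto.
  - rewrite (sumn_ext N _ (fun j => (if P j a then 1 else 0) + length (filter (P j) l))%nat).
    + rewrite sumn_add. pose proof (sumn_disjoint_indicator N (fun j => P j a) (Hd a)).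
      simpl. lia.
    + intros j _. simpl. destruct (P j a); reflexivity.
Qed.

Lemma words_count k : length (words k) = (2 ^ k)%nat.
Proof. induction k as [|k IH]; simpl; auto. rewrite length_app, !length_map. lia. Qed.

Lemma sparse_class (N L c : nat) (G : nat -> list bool -> bool) :
  (forall w j j', (j < N)%nat -> (j' < N)%nat -> G j w = true -> G j' w = true -> j = j') ->
  (2 ^ L < N * S c)%nat -> exists j, (j < N)%nat /\ (count (G j) L <= c)%nat.
Proof.
  intros Hd Hsize. apply NNPP. intros Hn.
  assert (Hbig : forall j, (j < N)%nat -> (S c <= count (G j) L)%nat).
  { intros j Hj. destruct (Nat.le_gt_cases (count (G j) L) c); [|lia]. exfalso; eauto. }
  pose proof (sumn_ge N _ _ Hbig).
  pose proof (sumn_disjoint_filter N G (words L) Hd). rewrite words_count in *.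
  unfold count in *. lia.
Qed.

Lemma tree_firstn T w l : isTree T -> T w = true -> T (firstn l w) = true.
Proof. intros HT Hw. apply (HT _ (skipn l w)). rewrite firstn_skipn. auto. Qed.

Lemma length_prefix Y U : length (prefix Y U) = U.
Proof. unfold prefix. rewrite length_map, length_seq. reflexivity. Qed.

(** König's lemma for binary trees: a tree with nodes at every level has a path.
    The path is built by always stepping to a child that still has extensions of
    every length. *)
Section Koenig.
Variable T : list bool -> bool.
Hypothesis HT : isTree T.

Definition extendible (w : list bool) : Prop :=
  forall d, exists u, length u = d /\ T (w ++ u) = true.

Lemma extendible_step w :
  extendible w -> extendible (w ++ [false]) \/ extendible (w ++ [true]).
Proof.
  intros H. apply NNPP. intros Hn. apply not_or_and in Hn. destruct Hn as [H0 H1].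
  apply not_all_ex_not in H0, H1. destruct H0 as [d0 H0]. destruct H1 as [d1 H1].
  destruct (H (S (Nat.max d0 d1))) as [u [Hu Hw]].
  destruct u as [|b u]; [simpl in Hu; lia|]. simpl in Hu.
  destruct b; [apply H1; exists (firstn d1 u)|apply H0; exists (firstn d0 u)];
    (split; [rewrite length_firstn; lia|]).
  - apply (HT _ (skipn d1 u)). rewrite <- !app_assoc. simpl. rewrite firstn_skipn. exact Hw.
  - apply (HT _ (skipn d0 u)). rewrite <- !app_assoc. simpl. rewrite firstn_skipn. exact Hw.
Qed.

Definition koenig_step (w : list bool) : list bool :=
  if excluded_middle_informative (extendible (w ++ [false])) then w ++ [false] else w ++ [true].

Fixpoint koenig_node (k : nat) : list bool :=
  match k with O => [] | S k => koenig_step (koenig_node k) end.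

Lemma koenig_node_spec : extendible [] -> forall k,
  extendible (koenig_node k) /\ length (koenig_node k) = k.
Proof.
  intros H0 k. induction k as [|k [IH1 IH2]]; simpl; auto.
  unfold koenig_step. destruct (excluded_middle_informative (extendible (koenig_node k ++ [false]))).
  - split; auto. rewrite length_app; simpl; lia.
  - split. { destruct (extendible_step _ IH1); tauto. } rewrite length_app; simpl; lia.
Qed.

Lemma koenig_node_S k : exists b, koenig_node (S k) = koenig_node k ++ [b].
Proof. simpl. unfold koenig_step. destruct (excluded_middle_informative _); eauto. Qed.

Lemma koenig : (forall l, exists w, length w = l /\ T w = true) -> exists X, path T X.
Proof.
  intros Hl. assert (H0 : extendible []).
  { intros d. destruct (Hl d) as [w [Hw Tw]]. exists w. auto. }
  set (X := fun i => nth i (koenig_node (S i)) false).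
  assert (Hp : forall k, prefix X k = koenig_node k).
  { induction k as [|k IH]; auto. unfold prefix in *. rewrite seq_S, map_app, IH. cbn [map plus].
    destruct (koenig_node_S k) as [b Hb]. unfold X. rewrite Hb. f_equal. f_equal.
    destruct (koenig_node_spec H0 k) as [_ Hk].
    rewrite app_nth2; rewrite Hk; [|lia]. rewrite Nat.sub_diag. reflexivity. }
  exists X. intros k. rewrite Hp. destruct (koenig_node_spec H0 k) as [Hk _].
  destruct (Hk 0%nat) as [u [Hu Tu]].
  destruct u; [|simpl in Hu; lia]. rewrite app_nil_r in Tu. exact Tu.
Qed.

Lemma koenig_contra : ~ (exists X, path T X) -> exists l, forall w, length w = l -> T w = false.
Proof.
  intros H. apply NNPP. intros Hn. apply H. apply koenig. intros l.
  apply NNPP. intros Hm. apply Hn. exists l. intros w Hw. destruct (T w) eqn:E; auto.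
  exfalso. apply Hm. eauto.
Qed.
End Koenig.

Lemma bar_uniform (T : list bool -> bool) (P : list bool -> Prop) :
  isTree T -> (forall w u, P w -> P (w ++ u)) ->
  (forall Y, path T Y -> exists U, P (prefix Y U)) ->
  forall n, exists L, (n <= L)%nat /\ forall w, length w = L -> T w = true -> P w.
Proof.
  intros HT HP Hbar n.
  set (S := fun w => T w && negb (asbool (P w))).
  assert (HS : isTree S).
  { intros w u Hs. unfold S in *. apply andb_prop in Hs as [H1 H2]. rewrite (HT w u H1).
    destruct (asbool (P w)) eqn:E; auto. apply (proj1 (asbool_true _)) in E.
    rewrite (proj2 (asbool_true _) (HP w u E)) in H2. discriminate. }
  assert (Hno : ~ exists Y, path S Y).
  { intros [Y HY]. destruct (Hbar Y) as [U HU].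
    - intros m. specialize (HY m). unfold S in HY. apply andb_prop in HY. tauto.
    - specialize (HY U). unfold S in HY. rewrite (proj2 (asbool_true _) HU) in HY.
      rewrite andb_false_r in HY. discriminate. }
  destruct (koenig_contra S HS Hno) as [L0 HL0]. exists (L0 + n)%nat. split; [lia|].
  intros w Hw Tw. rewrite <- (firstn_skipn L0 w). apply HP.
  specialize (HL0 (firstn L0 w) ltac:(rewrite length_firstn; lia)). unfold S in HL0.
  rewrite (tree_firstn T w L0 HT Tw) in HL0. simpl in HL0.
  apply asbool_true. destruct (asbool _); auto.
Qed.

Open Scope R_scope.

Lemma lim_le (u : nat -> R) l c N : Un_cv u l -> (forall m, (m >= N)%nat -> u m <= c) -> l <= c.
Proof.
  intros Hc Hb. destruct (Rle_or_lt l c) as [?|Hlt]; auto.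
  destruct (Hc (l - c)) as [N0 HN]; [lra|].
  specialize (HN (Nat.max N N0) ltac:(lia)). specialize (Hb (Nat.max N N0) ltac:(lia)).
  unfold Rdist in HN. apply Rabs_def2 in HN. lra.
Qed.

Lemma half_pow_pos n : 0 < (/ 2) ^ n.
Proof. apply pow_lt. lra. Qed.

Lemma count_measure_le (c m n : nat) : (c <= 2 ^ m)%nat -> INR c / 2 ^ (m + n) <= (/ 2) ^ n.
Proof.
  intros Hc. apply le_INR in Hc. rewrite pow_INR in Hc.
  replace (INR 2) with 2 in Hc by (simpl; lra).
  rewrite pow_add, pow_inv.
  assert (0 < 2 ^ m) by (apply pow_lt; lra). assert (0 < 2 ^ n) by (apply pow_lt; lra).
  unfold Rdiv. rewrite Rinv_mult.
  apply Rle_trans with (2 ^ m * (/ 2 ^ m * / 2 ^ n)).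
  - apply Rmult_le_compat_r; auto. apply Rmult_le_pos; left; apply Rinv_0_lt_compat; auto.
  - rewrite <- Rmult_assoc, Rinv_r by lra. lra.
Qed.

Lemma heavy_levels (T : list bool -> bool) (n N : nat) :
  measure_paths_gt T ((/ 2) ^ n) -> (n <= N)%nat ->
  ~ (forall m, (N <= m)%nat -> (count T m <= 2 ^ (m - n))%nat).
Proof.
  intros [l [Hcv Hlt]] HnN Hsmall.
  assert (Hb : forall m, (m >= N)%nat -> level_measure T m <= (/ 2) ^ n).
  { intros m Hm. unfold level_measure. fold (count T m).
    replace m with ((m - n) + n)%nat at 2 by lia.
    apply count_measure_le, Hsmall. lia. }
  pose proof (lim_le _ _ _ _ Hcv Hb). lra.
Qed.

Lemma heavy_tree_path (T : list bool -> bool) (n : nat) :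
  isTree T -> measure_paths_gt T ((/ 2) ^ n) -> exists X, path T X.
Proof.
  intros HT Hm. apply koenig; auto. intros l. apply NNPP. intros Hn.
  apply (heavy_levels T n (Nat.max l n) Hm ltac:(lia)). intros m Hm'.
  rewrite count_zero; [lia|]. intros w Hw. destruct (T w) eqn:E; auto. exfalso. apply Hn.
  exists (firstn l w). split; [rewrite length_firstn; lia|]. apply tree_firstn; auto.
Qed.

Lemma escape_sparse_set (T G : list bool -> bool) (E : list bool -> Prop) (n L : nat) :
  isTree T -> measure_paths_gt T ((/ 2) ^ n) -> (n <= L)%nat ->
  (forall w, length w = L -> T w = true -> ~ E w -> G w = true) ->
  (count G L <= 2 ^ (L - n))%nat ->
  exists Y, path T Y /\ E (prefix Y L).
Proof.
  intros HT Hm HnL HG Hc.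
  set (Z := fun w => T w && (Nat.ltb (length w) L || asbool (E (firstn L w)))).
  assert (HZ : isTree Z).
  { intros w u Hz. unfold Z in *. apply andb_prop in Hz as [H1 H2]. rewrite (HT w u H1). simpl.
    destruct (Nat.ltb (length w) L) eqn:El; auto. simpl.
    apply Nat.ltb_ge in El. rewrite length_app in H2.
    rewrite (proj2 (Nat.ltb_ge _ _)) in H2 by lia. simpl in H2.
    rewrite firstn_app in H2. replace (L - length w)%nat with 0%nat in H2 by lia.
    simpl in H2. rewrite app_nil_r in H2. exact H2. }
  destruct (classic (exists Y, path Z Y)) as [[Y HY]|Hno].
  - exists Y. split.
    + intros m. specialize (HY m). unfold Z in HY. apply andb_prop in HY. tauto.
    + specialize (HY L). unfold Z in HY. rewrite length_prefix, Nat.ltb_irrefl in HY.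
      rewrite firstn_all2 in HY by (rewrite length_prefix; lia).
      apply andb_prop in HY as [_ HY]. exact (proj1 (asbool_true _) HY).
  - exfalso. destruct (koenig_contra Z HZ Hno) as [l0 Hl0].
    apply (heavy_levels T n (L + l0) Hm ltac:(lia)). intros m Hm'.
    replace m with (L + (m - L))%nat by lia.
    eapply Nat.le_trans; [apply (count_prefix_bound L (m - L) T G)|].
    + intros w Hw Tw. apply HG; [rewrite length_firstn; lia|apply tree_firstn; auto|].
      intros HE. assert (Zw : Z w = true).
      { unfold Z. rewrite Tw, (proj2 (asbool_true _) HE). apply orb_true_r. }
      rewrite <- (firstn_skipn l0 w) in Zw. apply HZ in Zw.
      rewrite Hl0 in Zw by (rewrite length_firstn; lia). discriminate.
    + replace (L + (m - L) - n)%nat with ((L - n) + (m - L))%nat by lia.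
      rewrite Nat.pow_add_r. apply Nat.mul_le_mono_r. exact Hc.
Qed.

Lemma decQ_pair a b : Q2R (decQ (Cantor.to_nat (a, b))) = IZR (zdec a) / INR (S b).
Proof.
  unfold decQ. rewrite cancel_of_to. unfold Q2R. simpl.
  rewrite Zpos_P_of_succ_nat, <- Nat2Z.inj_succ, <- INR_IZR_INZ. reflexivity.
Qed.

Lemma in_interval_pair a b x :
  in_interval (Cantor.to_nat (a, b)) x <-> Q2R (decQ a) < x < Q2R (decQ b).
Proof. unfold in_interval. rewrite cancel_of_to. tauto. Qed.

Lemma in_interval0 x : ~ in_interval 0 x.
Proof.
  unfold in_interval. change (Cantor.of_nat 0) with (0%nat, 0%nat).
  unfold decQ. change (Cantor.of_nat 0) with (0%nat, 0%nat). unfold Q2R. simpl. lra.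
Qed.

Definition code_minus1 : nat := Cantor.to_nat (1%nat, 0%nat).
Definition code_2 : nat := Cantor.to_nat (4%nat, 0%nat).

Definition dyadic (n j : nat) : R := INR j * (/ 2) ^ n.
Definition code_dyadic (n j : nat) : nat := Cantor.to_nat ((2 * j)%nat, (2 ^ n - 1)%nat).

Lemma code_minus1_val : Q2R (decQ code_minus1) = -1.
Proof. unfold code_minus1. rewrite decQ_pair. replace (zdec 1) with (-1)%Z by reflexivity. simpl INR. lra. Qed.

Lemma code_2_val : Q2R (decQ code_2) = 2.
Proof. unfold code_2. rewrite decQ_pair. replace (zdec 4) with 2%Z by reflexivity. simpl INR. lra. Qed.

Lemma code_dyadic_val n j : Q2R (decQ (code_dyadic n j)) = dyadic n j.
Proof.
  unfold code_dyadic, dyadic. rewrite decQ_pair.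
  assert (Hz : zdec (2 * j) = Z.of_nat j).
  { unfold zdec. rewrite Nat.even_even, Nat.div2_double. reflexivity. }
  rewrite Hz, <- INR_IZR_INZ.
  assert (S (2 ^ n - 1) = 2 ^ n)%nat as ->.
  { pose proof (Nat.pow_nonzero 2 n ltac:(lia)). lia. }
  rewrite pow_INR, pow_inv. reflexivity.
Qed.

Lemma dyadic_range n j : (j < 2 ^ n)%nat -> 0 <= dyadic n j <= 1.
Proof.
  intros Hj. unfold dyadic. pose proof (half_pow_pos n). split.
  - apply Rmult_le_pos; [apply pos_INR|lra].
  - apply lt_INR in Hj. rewrite pow_INR in Hj. replace (INR 2) with 2 in Hj by (simpl; lra).
    rewrite pow_inv in *. assert (0 < 2 ^ n) by (apply pow_lt; lra).
    apply Rmult_le_reg_r with (2 ^ n); auto. rewrite Rmult_assoc, Rinv_l by lra. lra.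
Qed.

(** Distinct dyadic points of level [n] are [2^-n] apart, so no real lies within
    [2^-(n+2)] of two of them. *)
Lemma dyadic_separated n j j' q :
  Rabs (q - dyadic n j) <= (/ 2) ^ (n + 2) -> Rabs (q - dyadic n j') <= (/ 2) ^ (n + 2) -> j = j'.
Proof.
  intros H1 H2. destruct (Nat.eq_dec j j') as [|Hne]; auto. exfalso.
  rewrite pow_add in H1, H2. pose proof (half_pow_pos n).
  assert (Hd : Rabs (dyadic n j - dyadic n j') <= (/ 2) ^ n / 2).
  { replace (dyadic n j - dyadic n j') with ((q - dyadic n j') - (q - dyadic n j)) by ring.
    eapply Rle_trans; [apply Rabs_triang|]. rewrite Rabs_Ropp. simpl in H1, H2. lra. }
  unfold dyadic in Hd.
  rewrite <- Rmult_minus_distr_r, Rabs_mult, (Rabs_right ((/ 2) ^ n)) in Hd by lra.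
  assert (1 <= Rabs (INR j - INR j')).
  { destruct (Nat.lt_gt_cases j j') as [[Hl|Hl] _]; auto.
    - assert (Hl' : (S j <= j')%nat) by lia. apply le_INR in Hl'. rewrite S_INR in Hl'.
      rewrite Rabs_left by lra. lra.
    - assert (Hl' : (S j' <= j)%nat) by lia. apply le_INR in Hl'. rewrite S_INR in Hl'.
      rewrite Rabs_right by lra. lra. }
  nra.
Qed.

(** The constant-zero name enumerates only empty intervals: it names [[0,1]]. *)
Definition unit_set : R -> Prop := fun y => 0 <= y <= 1.
Definition zero_name : baire := fun _ => 0%nat.

Lemma zero_name_spec : name closed_neg zero_name unit_set.
Proof.
  split; [intros x Hx; exact Hx|]. intros x Hx. split.
  - intros Hn. exfalso. exact (Hn Hx).
  - intros [i Hi]. exfalso. exact (in_interval0 x Hi).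
Qed.

Lemma unit_set_AUC : mdom AUC unit_set.
Proof. left. intros y. unfold unit_set. tauto. Qed.

(** A name of the singleton [{j/2^n}] that starts with [M] zeros (empty intervals)
    and then alternately removes [(-1, j/2^n)] and [(j/2^n, 2)]: every name of [[0,1]]
    can be continued to a name of any singleton. *)
Definition singleton_name (M n j : nat) : baire :=
  fun i => if Nat.ltb i M then 0%nat
           else if Nat.even i then Cantor.to_nat (code_minus1, code_dyadic n j)
           else Cantor.to_nat (code_dyadic n j, code_2).

Lemma singleton_name_agree M n j : agree M (singleton_name M n j) zero_name.
Proof. intros i Hi. unfold singleton_name. rewrite (proj2 (Nat.ltb_lt _ _) Hi). reflexivity. Qed.

Lemma singleton_name_spec M n j : (j < 2 ^ n)%nat ->
  name closed_neg (singleton_name M n j) (fun y => y = dyadic n j).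
Proof.
  intros Hj. split.
  - intros x ->. apply dyadic_range; auto.
  - intros x Hx. split.
    + intros Hne. unfold singleton_name.
      destruct (Rtotal_order x (dyadic n j)) as [Hlt|[Heq|Hgt]]; [| contradiction |].
      * exists (2 * M)%nat. rewrite (proj2 (Nat.ltb_ge _ _)) by lia. rewrite Nat.even_even.
        apply in_interval_pair. rewrite code_minus1_val, code_dyadic_val. lra.
      * exists (2 * M + 1)%nat. rewrite (proj2 (Nat.ltb_ge _ _)) by lia. rewrite Nat.even_odd.
        apply in_interval_pair. rewrite code_2_val, code_dyadic_val. lra.
    + intros [i Hi] ->. unfold singleton_name in Hi. destruct (Nat.ltb i M).
      * exact (in_interval0 _ Hi).
      * destruct (Nat.even i); apply in_interval_pair in Hi;
          rewrite ?code_minus1_val, ?code_dyadic_val, ?code_2_val in Hi; lra.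
Qed.

Lemma singleton_AUC x : 0 <= x <= 1 -> mdom AUC (fun y => y = x).
Proof. intros Hx. right. exists x. split; auto. tauto. Qed.

(** Names of *-WWKL instances: [q 0] is the bound [n], and the tree is read off the
    odd positions of [q]. *)
Definition wwkl_space : rep_space := prod_space nat_space tree_space.
Definition tree_of (q : baire) (w : list bool) : bool := Nat.eqb (q (2 * enc w + 1)%nat) 1%nat.
Definition wwkl_instance (q : baire) : Prop :=
  exists x, name wwkl_space q x /\ mdom star_WWKL x.

Lemma name_tree_of q x : name wwkl_space q x -> snd x = tree_of q /\ fst x = q 0%nat.
Proof.
  intros [H1 [_ H3]]. split; [|symmetry; exact H1].
  apply functional_extensionality. intros w. unfold tree_of.
  pose proof (H3 w) as E. cbv beta in E. rewrite E. destruct (snd x w); reflexivity.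
Qed.

Lemma wwkl_instance_spec q : wwkl_instance q ->
  isTree (tree_of q) /\ measure_paths_gt (tree_of q) ((/ 2) ^ (q 0%nat)).
Proof.
  intros [x [Hn [Ht Hm]]]. destruct (name_tree_of q x Hn) as [E1 E2].
  rewrite <- E1, <- E2. auto.
Qed.

Lemma enc_bound w : (enc w + 2 <= 2 ^ (length w + 1))%nat.
Proof.
  induction w as [|b w IH]; [simpl; lia|]. cbn [enc length].
  replace (S (length w) + 1)%nat with (S (length w + 1)) by lia.
  rewrite Nat.pow_succ_r'. destruct b; lia.
Qed.

(** The nodes of length [<= L] are coded below [2^(L+2)]. *)
Lemma tree_of_agree L q q' : agree (2 ^ (L + 2)) q q' ->
  forall w, (length w <= L)%nat -> tree_of q w = tree_of q' w.
Proof.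
  intros Ha w Hw. unfold tree_of. rewrite Ha; auto. pose proof (enc_bound w).
  assert (2 ^ (length w + 1) <= 2 ^ (L + 1))%nat by (apply Nat.pow_le_mono_r; lia).
  replace (L + 2)%nat with (S (L + 1)) by lia. rewrite Nat.pow_succ_r'. lia.
Qed.

Definition cod (X : nat -> bool) : baire := fun i => if X i then 1%nat else 0%nat.

Definition choose_path (q : baire) : nat -> bool :=
  match excluded_middle_informative (exists X, path (tree_of q) X) with
  | left h => proj1_sig (constructive_indefinite_description _ h)
  | right _ => fun _ => false
  end.

Lemma choose_path_spec q : wwkl_instance q -> path (tree_of q) (choose_path q).
Proof.
  intros Hv. unfold choose_path. destruct (excluded_middle_informative _) as [h|h].
  - exact (proj2_sig (constructive_indefinite_description _ h)).
  - exfalso. apply h. destruct (wwkl_instance_spec q Hv). eapply heavy_tree_path; eauto.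
Qed.

(** The realizer of *-WWKL answering [Y] on the instance name [qs] and the chosen
    path everywhere else: realizers may be chosen adversarially on one instance. *)
Definition answer_with (qs : baire) (Y : nat -> bool) : pfun :=
  {| pdom := wwkl_instance;
     papp := fun q => if excluded_middle_informative (q = qs) then cod Y else cod (choose_path q) |}.

Lemma answer_with_at qs Y : papp (answer_with qs Y) qs = cod Y.
Proof. simpl. destruct (excluded_middle_informative (qs = qs)); congruence. Qed.

Lemma answer_with_realizes qs Y : (wwkl_instance qs -> path (tree_of qs) Y) ->
  realizes wwkl_space cantor_space (answer_with qs Y) star_WWKL.
Proof.
  intros HY q x Hn Hd. assert (Hv : wwkl_instance q) by (exists x; auto). split; [exact Hv|].
  destruct (name_tree_of q x Hn) as [E1 _]. simpl.
  destruct (excluded_middle_informative (q = qs)) as [->|Hne].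
  - exists Y. split; [intros m; reflexivity|]. change (path (snd x) Y). rewrite E1. auto.
  - exists (choose_path q). split; [intros m; reflexivity|].
    change (path (snd x) (choose_path q)). rewrite E1. apply choose_path_spec; auto.
Qed.

Definition wfun (w : list bool) : baire := fun i => if nth i w false then 1%nat else 0%nat.

Lemma div2_lt i U : (i < U)%nat -> (Nat.div2 i < U)%nat.
Proof. pose proof (Nat.le_div2_diag_l i). lia. Qed.

Lemma wfun_prefix Y U i : (i < U)%nat -> wfun (prefix Y U) i = cod Y i.
Proof.
  intros Hi. unfold wfun, prefix, cod.
  rewrite nth_indep with (d' := Y 0%nat) by (rewrite length_map, length_seq; lia).
  rewrite map_nth, seq_nth by lia. reflexivity.
Qed.

Lemma bpair_prefix_agree U p p' Y : agree U p p' ->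
  agree U (bpair p (cod Y)) (bpair p' (wfun (prefix Y U))).
Proof.
  intros Ha i Hi. pose proof (div2_lt i U Hi). unfold bpair. destruct (Nat.even i).
  - apply Ha; auto.
  - symmetry. apply wfun_prefix; auto.
Qed.

Definition decided (e : term) (p : baire) (k : nat) (w : list bool) : Prop :=
  exists y, forall r, agree (length w) r (bpair p (wfun w)) -> eval r e [k] y.

Lemma decided_app e p k w u : decided e p k w -> decided e p k (w ++ u).
Proof.
  intros [y Hy]. exists y. intros r Hr. apply Hy. intros i Hi.
  rewrite Hr by (rewrite length_app; lia). unfold bpair. destruct (Nat.even i); auto.
  unfold wfun. rewrite app_nth1 by (apply div2_lt; auto). reflexivity.
Qed.

Lemma decided_of_eval e p k Y y : eval (bpair p (cod Y)) e [k] y ->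
  exists U, decided e p k (prefix Y U).
Proof.
  intros Hev. destruct (eval_cont _ _ _ _ Hev) as [U HU]. exists U, y. intros r Hr.
  apply HU. rewrite length_prefix in Hr. intros i Hi.
  rewrite Hr by auto. symmetry. apply bpair_prefix_agree; auto. intros j _. reflexivity.
Qed.

Definition decided_value (e : term) (p : baire) (k : nat) (w : list bool) : nat :=
  match excluded_middle_informative (decided e p k w) with
  | left h => proj1_sig (constructive_indefinite_description _ h)
  | right _ => 0%nat
  end.

Lemma decided_value_spec e p k w : decided e p k w ->
  forall r, agree (length w) r (bpair p (wfun w)) -> eval r e [k] (decided_value e p k w).
Proof.
  intros Hw. unfold decided_value.
  destruct (excluded_middle_informative (decided e p k w)) as [h|h]; [|contradiction].
  exact (proj2_sig (constructive_indefinite_description _ h)).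
Qed.

Section NoReduction.
Variables H K : pfun.
Variables eH eK : term.
Hypothesis H_computes : forall p, pdom H p -> forall i, eval p eH [i] (papp H p i).
Hypothesis K_computes : forall p, pdom K p -> forall i, eval p eK [i] (papp K p i).
Hypothesis reduction : forall G, realizes wwkl_space cantor_space G star_WWKL ->
  realizes closed_neg unit_interval (wcomp H G K) AUC.

Lemma reduction_instance p A : name closed_neg p A -> mdom AUC A ->
  pdom K p /\ wwkl_instance (papp K p).
Proof.
  intros Hp HA. set (q := zero_name).
  assert (HG := answer_with_realizes q (choose_path q) (choose_path_spec q)).
  destruct (reduction _ HG p A Hp HA) as [[HK [Hv _]] _]. auto.
Qed.

(** Since any path [Y] of the instance [K p] may be the realizer's answer, [H] must
    turn [<p, Y>] into a name of a point of [A]. *)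
Lemma reduction_on_path p A Y : name closed_neg p A -> mdom AUC A ->
  path (tree_of (papp K p)) Y ->
  pdom H (bpair p (cod Y)) /\ exists y, name unit_interval (papp H (bpair p (cod Y))) y /\ A y.
Proof.
  intros Hp HA HY.
  assert (HG := answer_with_realizes (papp K p) Y (fun _ => HY)).
  destruct (reduction _ HG p A Hp HA) as [[_ [_ HH]] Hy].
  change (pdom H (bpair p (papp (answer_with (papp K p) Y) (papp K p)))) in HH.
  change (exists y, name unit_interval
            (papp H (bpair p (papp (answer_with (papp K p) Y) (papp K p)))) y /\ A y) in Hy.
  rewrite answer_with_at in HH, Hy. auto.
Qed.

Definition q0 : baire := papp K zero_name.
Definition n0 : nat := q0 0%nat.
Definition T0 : list bool -> bool := tree_of q0.
Definition k0 : nat := (n0 + 2)%nat.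

Lemma q0_instance : wwkl_instance q0.
Proof. exact (proj2 (reduction_instance _ _ zero_name_spec unit_set_AUC)). Qed.

Lemma uniform_decision : exists L, (n0 <= L)%nat /\
  forall w, length w = L -> T0 w = true -> decided eH zero_name k0 w.
Proof.
  destruct (wwkl_instance_spec q0 q0_instance) as [HT _].
  apply bar_uniform; auto.
  - intros w u. apply decided_app.
  - intros Y HY. destruct (reduction_on_path _ _ Y zero_name_spec unit_set_AUC HY) as [HH _].
    exact (decided_of_eval _ _ _ _ _ (H_computes _ HH k0)).
Qed.

Definition value (w : list bool) : nat := decided_value eH zero_name k0 w.

Definition near (j : nat) (w : list bool) : bool :=
  T0 w && asbool (Rabs (Q2R (decQ (value w)) - dyadic n0 j) <= (/ 2) ^ k0).

Lemma sparse_dyadic L : (n0 <= L)%nat ->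
  exists j, (j < 2 ^ n0)%nat /\ (count (near j) L <= 2 ^ (L - n0))%nat.
Proof.
  intros HL. apply sparse_class.
  - intros w j j' _ _ E1 E2. unfold near in E1, E2.
    apply andb_prop in E1 as [_ E1]. apply andb_prop in E2 as [_ E2].
    exact (dyadic_separated _ _ _ _ (proj1 (asbool_true _) E1) (proj1 (asbool_true _) E2)).
  - assert (2 ^ L = 2 ^ n0 * 2 ^ (L - n0))%nat as -> by (rewrite <- Nat.pow_add_r; f_equal; lia).
    pose proof (Nat.pow_nonzero 2 n0 ltac:(lia)). nia.
Qed.

(** By continuity of [K], a name of [{j / 2^n0}] extending a long enough piece of
    [zero_name] yields an instance with the same bound and the same tree up to level [L]. *)
Lemma perturbed_instance L j : (j < 2 ^ n0)%nat -> exists p,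
  name closed_neg p (fun y => y = dyadic n0 j) /\ agree L p zero_name /\
  wwkl_instance (papp K p) /\ papp K p 0%nat = n0 /\
  forall w, (length w <= L)%nat -> tree_of (papp K p) w = T0 w.
Proof.
  intros Hj.
  destruct (reduction_instance _ _ zero_name_spec unit_set_AUC) as [HK0 _].
  destruct (computable_use K eK K_computes zero_name (2 ^ (L + 2)) HK0) as [M HM].
  set (p := singleton_name (M + L) n0 j).
  assert (Hp := singleton_name_spec (M + L) n0 j Hj).
  destruct (reduction_instance p _ Hp (singleton_AUC _ (dyadic_range _ _ Hj))) as [HK Hv].
  assert (Ha : agree (2 ^ (L + 2)) (papp K p) q0).
  { apply HM; auto. apply (agree_mono M (M + L)); [lia|apply singleton_name_agree]. }
  exists p. split; [exact Hp|]. split; [|split; [exact Hv|split]].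
  - apply (agree_mono L (M + L)); [lia|apply singleton_name_agree].
  - apply Ha. pose proof (Nat.pow_nonzero 2 (L + 2) ltac:(lia)). lia.
  - intros w Hw. apply (tree_of_agree L); auto.
Qed.

Lemma no_reduction : False.
Proof.
  destruct uniform_decision as [L [HL Hdec]].
  destruct (sparse_dyadic L HL) as [j [Hj Hcount]].
  destruct (perturbed_instance L j Hj) as [p [Hp [Hagree [Hv [Hn HT]]]]].
  destruct (wwkl_instance_spec _ Hv) as [HTp Hmp]. rewrite Hn in Hmp.
  (* the new tree is too heavy to stay near [j / 2^n0] at level [L] *)
  destruct (escape_sparse_set _ (near j)
              (fun w => (/ 2) ^ k0 < Rabs (Q2R (decQ (value w)) - dyadic n0 j))
              n0 L HTp Hmp HL) as [Y [HY Hfar]]; auto.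
  { intros w Hw Tw Hnf. unfold near. rewrite <- HT, Tw by lia. simpl.
    apply asbool_true. lra. }
  pose proof (length_prefix Y L) as Hw. set (w := prefix Y L) in *.
  assert (Dw : decided eH zero_name k0 w).
  { apply Hdec; [exact Hw|]. rewrite <- HT by lia. apply HY. }
  destruct (reduction_on_path p _ Y Hp (singleton_AUC _ (dyadic_range _ _ Hj)) HY)
    as [HH [y [[_ Hy] ->]]].
  (* yet [H] outputs the decided value, which is [2^-k0]-close to [j / 2^n0] *)
  assert (Hval : papp H (bpair p (cod Y)) k0 = value w).
  { assert (Ha : agree (length w) (bpair p (cod Y)) (bpair zero_name (wfun w))).
    { rewrite Hw. apply bpair_prefix_agree, Hagree. }
    exact (eval_det _ _ _ _ (decided_value_spec _ _ _ _ Dw _ Ha) _ (H_computes _ HH k0)). }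
  specialize (Hy k0). rewrite Hval in Hy. lra.
Qed.
End NoReduction.

Theorem theorem16p5 :
  ~ weihrauch_le closed_neg unit_interval
      (prod_space nat_space tree_space) cantor_space
      AUC star_WWKL.
Proof.
  intros [H [K [[eH H_computes] [[eK K_computes] reduction]]]].
  exact (no_reduction H K eH eK H_computes K_computes reduction).
Qed.
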